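(* For $a\in(0,1]$ and $b=\sqrt{1-a^2}$, let $\gamma_a(s)=\hat\gamma_a(s)=\big(a\cos\tfrac{s}{a},a\sin\tfrac{s}{a},b\big)\in S^2$ and $y_a=\gamma_a\otimes\hat\gamma_a:(s,\hat s)\mapsto\gamma_a(s)\otimes\hat\gamma_a(\hat s)\in S^8$, $(s,\hat s)\in[0,2\pi a]^2$. Then $y_a$ is a flat torus and $W(y_a)=2\pi^2(1+a^2)$; in particular $W(y_a)>2\pi^2$ for all $a\in(0,1]$ and $W(y_a)\to 2\pi^2$ as $a\to0$.
   Context: For $x,\hat x\in\mathbb{R}^3$ the tensor product is $x\otimes\hat x=(x_i\hat x_j)_{i,j=1}^3\in\mathbb{R}^9$ (lexicographic order). For a closed immersed surface $x:M\to S^N$ with mean curvature vector $\vec H$ and Gauss curvature $K$, the Willmore functional is $W(x)=\int_M(|\vec H|^2-K+1)\,dM$. *)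

From Stdlib Require Import Reals Lra.
Open Scope R_scope.

(** Vectors in R^n are functions nat -> R (only indices < n matter). *)
Definition vec := nat -> R.

Fixpoint rsum (n : nat) (f : nat -> R) : R :=
  match n with O => 0 | S m => rsum m f + f m end.

Definition dot (n : nat) (u v : vec) : R := rsum n (fun k => u k * v k).

(** Tensor product x ⊗ x̂ in R^9, lexicographic order: index 3i+j ↦ x_i x̂_j. *)
Definition tensor3 (x xh : vec) : vec :=
  fun k => x (Nat.div k 3) * xh (Nat.modulo k 3).

Definition gamma_a (a : R) (s : R) : vec :=
  fun k => match k with
           | O => a * cos (s / a)
           | S O => a * sin (s / a)
           | S (S O) => sqrt (1 - a ^ 2)
           | _ => 0
           end.

Definition y_a (a : R) (s sh : R) : vec := tensor3 (gamma_a a s) (gamma_a a sh).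

Definition dS (f g : R -> R -> R) : Prop :=
  forall s t, derivable_pt_lim (fun u => f u t) s (g s t).
Definition dT (f g : R -> R -> R) : Prop :=
  forall s t, derivable_pt_lim (fun u => f s u) t (g s t).
Definition vdS (n : nat) (f g : R -> R -> vec) : Prop :=
  forall k, (k < n)%nat -> dS (fun s t => f s t k) (fun s t => g s t k).
Definition vdT (n : nat) (f g : R -> R -> vec) : Prop :=
  forall k, (k < n)%nat -> dT (fun s t => f s t k) (fun s t => g s t k).

(** Second-order jet of a parametrized surface x : R^2 -> R^n, together with
    the derivatives of the first fundamental form E, F, G that enter the
    Brioschi formula for the Gauss curvature of the induced metric. *)
Record Jets (n : nat) (x : R -> R -> vec) : Type := {
  xs : R -> R -> vec; xt : R -> R -> vec;
  xss : R -> R -> vec; xst : R -> R -> vec; xtt : R -> R -> vec;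
  Es : R -> R -> R; Et : R -> R -> R;
  Fs : R -> R -> R; Ft : R -> R -> R;
  Gs : R -> R -> R; Gt : R -> R -> R;
  Ett : R -> R -> R; Fst : R -> R -> R; Gss : R -> R -> R;
  j_xs : vdS n x xs; j_xt : vdT n x xt;
  j_xss : vdS n xs xss; j_xst : vdT n xs xst; j_xtt : vdT n xt xtt;
  j_Es : dS (fun s t => dot n (xs s t) (xs s t)) Es;
  j_Et : dT (fun s t => dot n (xs s t) (xs s t)) Et;
  j_Fs : dS (fun s t => dot n (xs s t) (xt s t)) Fs;
  j_Ft : dT (fun s t => dot n (xs s t) (xt s t)) Ft;
  j_Gs : dS (fun s t => dot n (xt s t) (xt s t)) Gs;
  j_Gt : dT (fun s t => dot n (xt s t) (xt s t)) Gt;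
  j_Ett : dT Et Ett; j_Fst : dT Fs Fst; j_Gss : dS Gs Gss
}.

Arguments xs {n x}. Arguments xt {n x}. Arguments xss {n x}.
Arguments xst {n x}. Arguments xtt {n x}.
Arguments Es {n x}. Arguments Et {n x}. Arguments Fs {n x}.
Arguments Ft {n x}. Arguments Gs {n x}. Arguments Gt {n x}.
Arguments Ett {n x}. Arguments Fst {n x}. Arguments Gss {n x}.

Section Geometry.
Context {n : nat} {x : R -> R -> vec} (J : Jets n x).

Definition fE s t := dot n (xs J s t) (xs J s t).
Definition fF s t := dot n (xs J s t) (xt J s t).
Definition fG s t := dot n (xt J s t) (xt J s t).
Definition fdet s t := fE s t * fG s t - fF s t ^ 2.

(** Projection onto the normal space of the surface inside S^{n-1}
    (orthogonal complement of span{x_s, x_t, x}; x is a unit vector). *)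
Definition nperp (s t : R) (v : vec) : vec :=
  let a1 := dot n v (xs J s t) in
  let a2 := dot n v (xt J s t) in
  fun k => v k
    - (fG s t * a1 - fF s t * a2) / fdet s t * xs J s t k
    - (fE s t * a2 - fF s t * a1) / fdet s t * xt J s t k
    - dot n v (x s t) * x s t k.

(** Second fundamental form of x in the sphere, and mean curvature vector
    H = (1/2) g^{ij} II_{ij}. *)
Definition II11 s t := nperp s t (xss J s t).
Definition II12 s t := nperp s t (xst J s t).
Definition II22 s t := nperp s t (xtt J s t).
Definition Hvec (s t : R) : vec :=
  fun k => / 2 * (fG s t * II11 s t k - 2 * fF s t * II12 s t k
                  + fE s t * II22 s t k) / fdet s t.

Definition det3 (a11 a12 a13 a21 a22 a23 a31 a32 a33 : R) : R :=
  a11 * (a22 * a33 - a23 * a32) - a12 * (a21 * a33 - a23 * a31)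
  + a13 * (a21 * a32 - a22 * a31).

(** Gauss curvature of the induced metric (Brioschi formula). *)
Definition gaussK (s t : R) : R :=
  let E := fE s t in let F := fF s t in let G := fG s t in
  (det3 (- / 2 * Ett J s t + Fst J s t - / 2 * Gss J s t)
        (/ 2 * Es J s t) (Fs J s t - / 2 * Et J s t)
        (Ft J s t - / 2 * Gs J s t) E F
        (/ 2 * Gt J s t) F G
   - det3 0 (/ 2 * Et J s t) (/ 2 * Gs J s t)
          (/ 2 * Et J s t) E F
          (/ 2 * Gs J s t) F G) / (fdet s t) ^ 2.

Definition willmore_density (s t : R) : R :=
  (dot n (Hvec s t) (Hvec s t) - gaussK s t + 1) * sqrt (fdet s t).

End Geometry.

Definition IsIntegral2 (f : R -> R -> R) (a b c d I : R) : Prop :=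
  exists (pri : forall t, Riemann_integrable (fun s => f s t) a b)
         (pro : Riemann_integrable (fun t => RiemannInt (pri t)) c d),
    RiemannInt pro = I.

(** W(x) = I over the fundamental domain [0,L]^2 of a doubly periodic
    parametrization. *)
Definition Willmore_is {n : nat} {x : R -> R -> vec} (J : Jets n x)
  (L W : R) : Prop :=
  IsIntegral2 (willmore_density J) 0 L 0 L W.

From Pilot Require Import Defs.
From Stdlib Require Import Reals Lra Lia FunctionalExtensionality.
From Coquelicot Require Import Coquelicot.
Open Scope R_scope.

(* The circle gamma_a is a unit-speed curve on S^2, so the coordinate fields
   gamma_a' (x) gamma_a and gamma_a (x) gamma_a' of y_a are orthonormal: the
   induced metric is ds^2 + dt^2, hence flat with area element ds dt.  Removing
   the radial part from the second derivatives gives the mean curvature vector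
   H = 1/2 (gamma_a'' (x) gamma_a + gamma_a (x) gamma_a'' + 2 gamma_a (x) gamma_a),
   and |gamma_a''| = 1/a, gamma_a''.gamma_a = -1 yield |H|^2 - K + 1 =
   (1 + 1/a^2)/2 everywhere.  Integrating over [0, 2 pi a]^2 gives
   2 pi^2 (1 + a^2). *)

Lemma dot_ext_l n u u' v : (forall k, (k < n)%nat -> u k = u' k) ->
  dot n u v = dot n u' v.
Proof.
  unfold dot; induction n as [|n IH]; intros Hu; simpl; [reflexivity|].
  rewrite IH, (Hu n) by (intros; auto; lia). reflexivity.
Qed.

Lemma dot_comm n u v : dot n u v = dot n v u.
Proof.
  unfold dot; induction n as [|n IH]; simpl; [reflexivity|].
  rewrite IH; ring.
Qed.

Lemma dot_ext n u u' v v' : (forall k, (k < n)%nat -> u k = u' k) ->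
  (forall k, (k < n)%nat -> v k = v' k) -> dot n u v = dot n u' v'.
Proof.
  intros Hu Hv. rewrite (dot_ext_l _ _ _ _ Hu), dot_comm,
    (dot_ext_l _ _ _ _ Hv), dot_comm. reflexivity.
Qed.

Lemma dot_tensor3 u v u' v' :
  dot 9 (tensor3 u v) (tensor3 u' v') = dot 3 u u' * dot 3 v v'.
Proof. unfold dot, tensor3; simpl. ring. Qed.

Lemma dot_half_tensor3_sum c g d h :
  let w := fun k => / 2 * (tensor3 c h k + tensor3 g d k + 2 * tensor3 g h k) in
  dot 9 w w =
  / 4 * (dot 3 c c * dot 3 h h + dot 3 g g * dot 3 d d + 4 * dot 3 g g * dot 3 h h
         + 2 * dot 3 c g * dot 3 h d + 4 * dot 3 c g * dot 3 h h
         + 4 * dot 3 g g * dot 3 d h).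
Proof. unfold dot, tensor3; simpl. field. Qed.

Lemma derivable_pt_lim_const_fun f c x : (forall y, f y = c) -> derivable_pt_lim f x 0.
Proof.
  intros Hf. apply (derivable_pt_lim_ext (fun _ => c)); [intros; auto|].
  apply derivable_pt_lim_const.
Qed.

Lemma derivable_pt_lim_eq0_of_const f c x l :
  (forall y, f y = c) -> derivable_pt_lim f x l -> l = 0.
Proof.
  intros Hf Hl. exact (uniqueness_limite f x _ _ Hl (derivable_pt_lim_const_fun f c x Hf)).
Qed.

Lemma derivable_pt_lim_tensor3_l (u u' : R -> vec) v k s :
  (forall i y, derivable_pt_lim (fun z => u z i) y (u' y i)) ->
  derivable_pt_lim (fun z => tensor3 (u z) v k) s (tensor3 (u' s) v k).
Proof.
  intros Hu; unfold tensor3.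
  apply (derivable_pt_lim_ext (fun z => v (k mod 3)%nat * u z (k / 3)%nat));
    [intros; ring|].
  rewrite Rmult_comm. apply derivable_pt_lim_scal, Hu.
Qed.

Lemma derivable_pt_lim_tensor3_r u (v v' : R -> vec) k s :
  (forall i y, derivable_pt_lim (fun z => v z i) y (v' y i)) ->
  derivable_pt_lim (fun z => tensor3 u (v z) k) s (tensor3 u (v' s) k).
Proof. intros Hv; unfold tensor3. apply derivable_pt_lim_scal, Hv. Qed.

Lemma RiemannInt_const_fun f k a b : (forall x, f x = k) ->
  {pr : Riemann_integrable f a b | RiemannInt pr = k * (b - a)}.
Proof.
  intros Hf. replace f with (fct_cte k) by (apply functional_extensionality; auto).
  exists (RiemannInt_P14 a b k). apply RiemannInt_P15.
Qed.

Lemma IsIntegral2_const f k a b c d : (forall s t, f s t = k) ->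
  IsIntegral2 f a b c d (k * (b - a) * (d - c)).
Proof.
  intros Hf.
  pose (pri t := proj1_sig (RiemannInt_const_fun (fun s => f s t) k a b
                              (fun s => Hf s t))).
  assert (Hpri : forall t, RiemannInt (pri t) = k * (b - a))
    by (intros t; exact (proj2_sig (RiemannInt_const_fun _ _ _ _ _))).
  destruct (RiemannInt_const_fun _ _ c d Hpri) as [pro Hpro].
  exists pri, pro. exact Hpro.
Qed.

Section ConstantMetric.
Context {n : nat} {x : R -> R -> vec} (J : Jets n x) (E0 F0 G0 : R).
Hypothesis (HE : forall s t, fE J s t = E0) (HF : forall s t, fF J s t = F0)
  (HG : forall s t, fG J s t = G0).

Lemma Es_constant_metric s t : Es J s t = 0.
Proof. exact (derivable_pt_lim_eq0_of_const _ _ _ _ (fun u => HE u t) (j_Es _ _ J s t)). Qed.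
Lemma Et_constant_metric s t : Et J s t = 0.
Proof. exact (derivable_pt_lim_eq0_of_const _ _ _ _ (fun u => HE s u) (j_Et _ _ J s t)). Qed.
Lemma Fs_constant_metric s t : Fs J s t = 0.
Proof. exact (derivable_pt_lim_eq0_of_const _ _ _ _ (fun u => HF u t) (j_Fs _ _ J s t)). Qed.
Lemma Ft_constant_metric s t : Ft J s t = 0.
Proof. exact (derivable_pt_lim_eq0_of_const _ _ _ _ (fun u => HF s u) (j_Ft _ _ J s t)). Qed.
Lemma Gs_constant_metric s t : Gs J s t = 0.
Proof. exact (derivable_pt_lim_eq0_of_const _ _ _ _ (fun u => HG u t) (j_Gs _ _ J s t)). Qed.
Lemma Gt_constant_metric s t : Gt J s t = 0.
Proof. exact (derivable_pt_lim_eq0_of_const _ _ _ _ (fun u => HG s u) (j_Gt _ _ J s t)). Qed.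

Lemma gaussK_constant_metric s t : gaussK J s t = 0.
Proof.
  assert (HEtt : Ett J s t = 0) by exact (derivable_pt_lim_eq0_of_const _ _ _ _
    (fun u => Et_constant_metric s u) (j_Ett _ _ J s t)).
  assert (HFst : Fst J s t = 0) by exact (derivable_pt_lim_eq0_of_const _ _ _ _
    (fun u => Fs_constant_metric s u) (j_Fst _ _ J s t)).
  assert (HGss : Gss J s t = 0) by exact (derivable_pt_lim_eq0_of_const _ _ _ _
    (fun u => Gs_constant_metric u t) (j_Gss _ _ J s t)).
  unfold gaussK, det3.
  rewrite HEtt, HFst, HGss, Es_constant_metric, Et_constant_metric,
    Fs_constant_metric, Ft_constant_metric, Gs_constant_metric, Gt_constant_metric.
  unfold Rdiv; ring.
Qed.

End ConstantMetric.

Definition dgamma_a (a s : R) : vec := fun k => match k with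
  | O => - sin (s / a) | S O => cos (s / a) | _ => 0 end.
Definition d2gamma_a (a s : R) : vec := fun k => match k with
  | O => - (cos (s / a) / a) | S O => - (sin (s / a) / a) | _ => 0 end.

Section Circle.
Variable a : R.
Hypothesis a_neq0 : a <> 0.

Lemma derivable_pt_lim_gamma_a i s :
  derivable_pt_lim (fun y => gamma_a a y i) s (dgamma_a a s i).
Proof.
  destruct i as [|[|[|i]]]; simpl; try apply derivable_pt_lim_const;
    apply is_derive_Reals; auto_derive; auto; unfold Rdiv; field; auto.
Qed.

Lemma derivable_pt_lim_dgamma_a i s :
  derivable_pt_lim (fun y => dgamma_a a y i) s (d2gamma_a a s i).
Proof.
  destruct i as [|[|[|i]]]; simpl; try apply derivable_pt_lim_const;
    apply is_derive_Reals; auto_derive; auto; unfold Rdiv; field; auto.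
Qed.

Lemma gamma_a_periodic s i : gamma_a a (s + 2 * PI * a) i = gamma_a a s i.
Proof.
  destruct i as [|[|[|i]]]; simpl; auto;
    replace ((s + 2 * PI * a) / a) with (s / a + 2 * PI) by (field; auto).
  - rewrite cos_plus, cos_2PI, sin_2PI; ring.
  - rewrite sin_plus, cos_2PI, sin_2PI; ring.
Qed.

Lemma gamma_a_unit s : a ^ 2 <= 1 -> dot 3 (gamma_a a s) (gamma_a a s) = 1.
Proof.
  intros Ha. unfold dot; simpl. rewrite sqrt_sqrt by lra.
  pose proof (sin2_cos2 (s / a)) as Hsc; unfold Rsqr in Hsc. nra.
Qed.

Lemma dgamma_a_unit s : dot 3 (dgamma_a a s) (dgamma_a a s) = 1.
Proof.
  unfold dot; simpl. pose proof (sin2_cos2 (s / a)) as Hsc; unfold Rsqr in Hsc. nra.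
Qed.

Lemma dot_dgamma_a_gamma_a s : dot 3 (dgamma_a a s) (gamma_a a s) = 0.
Proof. unfold dot; simpl. ring. Qed.

Lemma dot_d2gamma_a_gamma_a s : dot 3 (d2gamma_a a s) (gamma_a a s) = -1.
Proof.
  unfold dot; simpl. pose proof (sin2_cos2 (s / a)) as Hsc; unfold Rsqr in Hsc.
  transitivity (- (sin (s / a) * sin (s / a) + cos (s / a) * cos (s / a)));
    [unfold Rdiv; field; auto | rewrite Hsc; ring].
Qed.

Lemma dot_d2gamma_a_dgamma_a s : dot 3 (d2gamma_a a s) (dgamma_a a s) = 0.
Proof. unfold dot; simpl. unfold Rdiv; ring. Qed.

Lemma d2gamma_a_norm2 s : dot 3 (d2gamma_a a s) (d2gamma_a a s) = / a ^ 2.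
Proof.
  unfold dot; simpl. pose proof (sin2_cos2 (s / a)) as Hsc; unfold Rsqr in Hsc.
  transitivity ((sin (s / a) * sin (s / a) + cos (s / a) * cos (s / a)) / a ^ 2);
    [unfold Rdiv; field; auto | rewrite Hsc; field; auto].
Qed.

End Circle.

Section JetsOfY.
Variable a : R.
Hypothesis Ha : 0 < a <= 1.
Variable J : Jets 9 (y_a a).

Let a_neq0 : a <> 0. Proof. lra. Qed.
Let a2_le1 : a ^ 2 <= 1. Proof. nra. Qed.

Lemma xs_y_a s t k : (k < 9)%nat ->
  xs J s t k = tensor3 (dgamma_a a s) (gamma_a a t) k.
Proof.
  intros Hk. apply (uniqueness_limite (fun u => y_a a u t k) s);
    [exact (j_xs _ _ J k Hk s t)|].
  apply derivable_pt_lim_tensor3_l, derivable_pt_lim_gamma_a, a_neq0.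
Qed.

Lemma xt_y_a s t k : (k < 9)%nat ->
  Defs.xt J s t k = tensor3 (gamma_a a s) (dgamma_a a t) k.
Proof.
  intros Hk. apply (uniqueness_limite (fun u => y_a a s u k) t);
    [exact (j_xt _ _ J k Hk s t)|].
  apply derivable_pt_lim_tensor3_r, derivable_pt_lim_gamma_a, a_neq0.
Qed.

Lemma xss_y_a s t k : (k < 9)%nat ->
  xss J s t k = tensor3 (d2gamma_a a s) (gamma_a a t) k.
Proof.
  intros Hk. apply (uniqueness_limite (fun u => xs J u t k) s);
    [exact (j_xss _ _ J k Hk s t)|].
  apply (derivable_pt_lim_ext (fun u => tensor3 (dgamma_a a u) (gamma_a a t) k));
    [intros u; symmetry; apply xs_y_a, Hk|].
  apply derivable_pt_lim_tensor3_l, derivable_pt_lim_dgamma_a, a_neq0.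
Qed.

Lemma xtt_y_a s t k : (k < 9)%nat ->
  xtt J s t k = tensor3 (gamma_a a s) (d2gamma_a a t) k.
Proof.
  intros Hk. apply (uniqueness_limite (fun u => Defs.xt J s u k) t);
    [exact (j_xtt _ _ J k Hk s t)|].
  apply (derivable_pt_lim_ext (fun u => tensor3 (gamma_a a s) (dgamma_a a u) k));
    [intros u; symmetry; apply xt_y_a, Hk|].
  apply derivable_pt_lim_tensor3_r, derivable_pt_lim_dgamma_a, a_neq0.
Qed.

Lemma fE_y_a s t : fE J s t = 1.
Proof.
  unfold fE. rewrite (dot_ext _ _ _ _ _ (xs_y_a s t) (xs_y_a s t)), dot_tensor3,
    dgamma_a_unit, gamma_a_unit by exact a2_le1. ring.
Qed.

Lemma fF_y_a s t : fF J s t = 0.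
Proof.
  unfold fF. rewrite (dot_ext _ _ _ _ _ (xs_y_a s t) (xt_y_a s t)), dot_tensor3,
    dot_dgamma_a_gamma_a. ring.
Qed.

Lemma fG_y_a s t : fG J s t = 1.
Proof.
  unfold fG. rewrite (dot_ext _ _ _ _ _ (xt_y_a s t) (xt_y_a s t)), dot_tensor3,
    dgamma_a_unit, gamma_a_unit by exact a2_le1. ring.
Qed.

Lemma fdet_y_a s t : fdet J s t = 1.
Proof. unfold fdet. rewrite fE_y_a, fF_y_a, fG_y_a. ring. Qed.

Lemma gaussK_y_a s t : gaussK J s t = 0.
Proof. exact (gaussK_constant_metric J 1 0 1 fE_y_a fF_y_a fG_y_a s t). Qed.

Lemma Hvec_y_a s t k : (k < 9)%nat ->
  Hvec J s t k = / 2 * (tensor3 (d2gamma_a a s) (gamma_a a t) k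
                        + tensor3 (gamma_a a s) (d2gamma_a a t) k
                        + 2 * tensor3 (gamma_a a s) (gamma_a a t) k).
Proof.
  intros Hk.
  assert (ss_s : dot 9 (xss J s t) (xs J s t) = 0).
  { rewrite (dot_ext _ _ _ _ _ (xss_y_a s t) (xs_y_a s t)), dot_tensor3,
      dot_d2gamma_a_dgamma_a. ring. }
  assert (ss_t : dot 9 (xss J s t) (Defs.xt J s t) = 0).
  { rewrite (dot_ext _ _ _ _ _ (xss_y_a s t) (xt_y_a s t)), dot_tensor3,
      (dot_comm 3 (gamma_a a t)), dot_dgamma_a_gamma_a. ring. }
  assert (ss_y : dot 9 (xss J s t) (y_a a s t) = -1).
  { rewrite (dot_ext_l _ _ _ _ (xss_y_a s t)); unfold y_a; rewrite dot_tensor3,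
      dot_d2gamma_a_gamma_a, gamma_a_unit by auto. ring. }
  assert (tt_s : dot 9 (xtt J s t) (xs J s t) = 0).
  { rewrite (dot_ext _ _ _ _ _ (xtt_y_a s t) (xs_y_a s t)), dot_tensor3,
      (dot_comm 3 (gamma_a a s)), dot_dgamma_a_gamma_a. ring. }
  assert (tt_t : dot 9 (xtt J s t) (Defs.xt J s t) = 0).
  { rewrite (dot_ext _ _ _ _ _ (xtt_y_a s t) (xt_y_a s t)), dot_tensor3,
      dot_d2gamma_a_dgamma_a. ring. }
  assert (tt_y : dot 9 (xtt J s t) (y_a a s t) = -1).
  { rewrite (dot_ext_l _ _ _ _ (xtt_y_a s t)); unfold y_a; rewrite dot_tensor3,
      dot_d2gamma_a_gamma_a, gamma_a_unit by auto. ring. }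
  unfold Hvec, II11, II22, nperp; cbv beta zeta.
  rewrite ss_s, ss_t, ss_y, tt_s, tt_t, tt_y, fE_y_a, fF_y_a, fG_y_a, fdet_y_a,
    (xss_y_a s t k Hk), (xtt_y_a s t k Hk).
  unfold y_a. field.
Qed.

Lemma willmore_density_y_a s t : willmore_density J s t = (/ a ^ 2 + 1) / 2.
Proof.
  unfold willmore_density.
  rewrite (dot_ext _ _ _ _ _ (Hvec_y_a s t) (Hvec_y_a s t)), dot_half_tensor3_sum,
    (dot_comm 3 (gamma_a a t) (d2gamma_a a t)), !d2gamma_a_norm2, !gamma_a_unit,
    !dot_d2gamma_a_gamma_a, gaussK_y_a, fdet_y_a, sqrt_1 by auto.
  field. exact a_neq0.
Qed.

End JetsOfY.

Definition y_a_jets (a : R) (a_neq0 : a <> 0) (a2_le1 : a ^ 2 <= 1) : Jets 9 (y_a a).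
Proof.
  refine (Build_Jets 9 (y_a a)
    (fun s t => tensor3 (dgamma_a a s) (gamma_a a t))
    (fun s t => tensor3 (gamma_a a s) (dgamma_a a t))
    (fun s t => tensor3 (d2gamma_a a s) (gamma_a a t))
    (fun s t => tensor3 (dgamma_a a s) (dgamma_a a t))
    (fun s t => tensor3 (gamma_a a s) (d2gamma_a a t))
    (fun _ _ => 0) (fun _ _ => 0) (fun _ _ => 0) (fun _ _ => 0) (fun _ _ => 0)
    (fun _ _ => 0) (fun _ _ => 0) (fun _ _ => 0) (fun _ _ => 0)
    _ _ _ _ _ _ _ _ _ _ _ _ _ _).
  all: try (intros k _ s t;
            first [ apply derivable_pt_lim_tensor3_l | apply derivable_pt_lim_tensor3_r ];
            first [ apply derivable_pt_lim_gamma_a | apply derivable_pt_lim_dgamma_a ];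
            exact a_neq0).
  all: intros s t; eapply derivable_pt_lim_const_fun; intros u;
       rewrite ?dot_tensor3, ?dgamma_a_unit, ?gamma_a_unit, ?dot_dgamma_a_gamma_a,
         ?(dot_comm 3 (gamma_a a _) (dgamma_a a _)), ?dot_dgamma_a_gamma_a by exact a2_le1;
       reflexivity.
Defined.

Lemma limit1_in_continuity_pt f D x l :
  continuity_pt f x -> f x = l -> (forall y, D y -> y <> x) -> limit1_in f D l x.
Proof.
  intros Hf <- HD. apply (limit1_imp _ (D_x no_cond x)); [|exact Hf].
  intros y Hy. split; [exact I | apply not_eq_sym, HD, Hy].
Qed.

Theorem mainTheorem5 :
  (forall a : R, 0 < a <= 1 ->
     let L := 2 * PI * a in
     (forall s t k, y_a a (s + L) t k = y_a a s t k /\ y_a a s (t + L) k = y_a a s t k) /\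
     (forall s t, dot 9 (y_a a s t) (y_a a s t) = 1) /\
     inhabited (Jets 9 (y_a a)) /\
     (forall J : Jets 9 (y_a a),
        (forall s t, 0 < fdet J s t) /\
        (forall s t, gaussK J s t = 0) /\
        Willmore_is J L (2 * PI ^ 2 * (1 + a ^ 2))) /\
     2 * PI ^ 2 * (1 + a ^ 2) > 2 * PI ^ 2) /\
  limit1_in (fun a => 2 * PI ^ 2 * (1 + a ^ 2)) (fun a => 0 < a <= 1)
            (2 * PI ^ 2) 0.
Proof.
  pose proof PI_RGT_0 as PI_pos.
  split.
  - intros a Ha L.
    assert (a_neq0 : a <> 0) by lra.
    assert (a2_le1 : a ^ 2 <= 1) by nra.
    split; [|split; [|split; [|split]]].
    + intros s t k; unfold y_a, tensor3, L. rewrite !gamma_a_periodic by exact a_neq0.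
      split; reflexivity.
    + intros s t. unfold y_a. rewrite dot_tensor3, !gamma_a_unit by exact a2_le1. ring.
    + exact (inhabits (y_a_jets a a_neq0 a2_le1)).
    + intros J. split; [|split].
      * intros s t. rewrite fdet_y_a by exact Ha. lra.
      * exact (gaussK_y_a a Ha J).
      * unfold Willmore_is.
        replace (2 * PI ^ 2 * (1 + a ^ 2)) with ((/ a ^ 2 + 1) / 2 * (L - 0) * (L - 0))
          by (unfold L; field; exact a_neq0).
        apply IsIntegral2_const, willmore_density_y_a, Ha.
    + assert (0 < PI ^ 2 * a ^ 2) by (apply Rmult_lt_0_compat; apply pow_lt; lra).
      lra.
  - apply limit1_in_continuity_pt; [reg | ring | intros a Ha; lra].
Qed.
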